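(* Let $k\ge1$ (possibly $k=\infty$), let $n_i$ ($1\le i\le k$) be positive integers, and let $\mathbb F_\theta^+$ be the single-vertex $k$-graph underlying the standard product of the odometers $\{(\mathbb Z,[n_i])\}_{i=1}^k$. The following are equivalent: (1) the $n_i$ are pairwise coprime; (2) for all $1\le i<j\le k$ and $(\mathfrak s,\mathfrak t')\in[n_i]\times[n_j]$ there is a unique $(\mathfrak s',\mathfrak t)\in[n_i]\times[n_j]$ with $x^i_{\mathfrak s}x^j_{\mathfrak t}=x^j_{\mathfrak t'}x^i_{\mathfrak s'}$; (3) any two $\mu,\nu\in\mathbb F_\theta^+$ having a right common multiple have a unique right least common multiple, and it has degree $d(\mu)\vee d(\nu)$; (4) $\mathbb F_\theta^+$ is right LCM.
   Context: $[m]=\{0,\dots,m-1\}$. $\mathbb F_\theta^+$ is the monoid generated by $x^i_{\mathfrak s}$ ($1\le i\le k$, $\mathfrak s\in[n_i]$) subject to $x^i_{\mathfrak s}x^j_{\mathfrak t}=x^j_{\mathfrak t'}x^i_{\mathfrak s'}$ for $i<j$ whenever $\mathfrak s+\mathfrak tn_i=\mathfrak t'+\mathfrak s'n_j$ ($\mathfrak s,\mathfrak s'\in[n_i]$, $\mathfrak t,\mathfrak t'\in[n_j]$); it is a single-vertex $k$-graph with degree map $d(x^i_{\mathfrak s})=e_i\in\mathbb N^k$ (unique factorization holds). $p$ is a right multiple of $q$ if $p=qr$ for some $r$; a monoid is right LCM if any two elements having a right common multiple have a right least common multiple (a common right multiple of which every common right multiple is a right multiple). *)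

From mathcomp Require Import all_boot.
Set Implicit Arguments. Unset Strict Implicit. Unset Printing Implicit Defensive.

(* Number of colours: [Some k] means k colours (indexed 0..k-1, i.e. colour
   i here is colour i+1 of the paper); [None] means k = infinity (colours
   indexed by all of nat). *)
Definition color_ok (k : option nat) (i : nat) : bool :=
  if k is Some k' then i < k' else true.

(* A generator x^i_s is encoded as the pair (i, s). *)
Definition gen := (nat * nat)%type.

Definition valid_gen (k : option nat) (n : nat -> nat) (g : gen) : bool :=
  color_ok k g.1 && (g.2 < n g.1).

Definition valid_word (k : option nat) (n : nat -> nat) (w : seq gen) : bool :=
  all (valid_gen k n) w.

Definition odo_rel (k : option nat) (n : nat -> nat) (a b c d : gen) : Prop :=
  exists i j s t t' s',
    [/\ [/\ a = (i, s), b = (j, t), c = (j, t') & d = (i, s')],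
        [/\ i < j, color_ok k i & color_ok k j],
        [/\ s < n i, s' < n i, t < n j & t' < n j] &
        s + t * n i = t' + s' * n j].

(* The monoid congruence on words generated by the defining relations:
   equality in F_theta^+ of the elements represented by two words. *)
Inductive meq (k : option nat) (n : nat -> nat) : seq gen -> seq gen -> Prop :=
| meq_refl w : meq k n w w
| meq_sym u v : meq k n u v -> meq k n v u
| meq_trans u v w : meq k n u v -> meq k n v w -> meq k n u w
| meq_step w1 w2 a b c d : odo_rel k n a b c d ->
    meq k n (w1 ++ [:: a; b] ++ w2) (w1 ++ [:: c; d] ++ w2).

(* degree d(w) in N^k, as a (finitely supported) function of the colour *)
Definition deg (w : seq gen) (i : nat) : nat := count (fun g => g.1 == i) w.

Definition right_multiple k n (p q : seq gen) : Prop :=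
  exists2 r, valid_word k n r & meq k n p (q ++ r).

Definition right_common_multiple k n (m mu nu : seq gen) : Prop :=
  [/\ valid_word k n m, right_multiple k n m mu & right_multiple k n m nu].

Definition right_lcm k n (l mu nu : seq gen) : Prop :=
  right_common_multiple k n l mu nu /\
  forall m, right_common_multiple k n m mu nu -> right_multiple k n m l.

Definition right_LCM_monoid k n : Prop :=
  forall mu nu, valid_word k n mu -> valid_word k n nu ->
    (exists m, right_common_multiple k n m mu nu) ->
    exists l, right_lcm k n l mu nu.

From mathcomp Require Import all_boot zify.
Set Implicit Arguments. Unset Strict Implicit. Unset Printing Implicit Defensive.

(* A word with colours c_1 ... c_m and digits d_1 ... d_m (d_r < n_{c_r}) is
   read as the mixed-radix number d_1 + n_{c_1} (d_2 + n_{c_2} (...)), its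
   value.  The defining relation x^i_s x^j_t = x^j_t' x^i_s' says exactly that
   the two-letter words have the same value, so the multiset of colours and
   the value are invariants; conversely any colour of a word can be moved to
   its front, so two words with the same invariants are equal in F_theta^+.
   Hence p = q r iff the colours of q are among those of p and the value of p
   reduces to that of q modulo the product of the n_c over the colours of q.
   When the n_i are pairwise coprime this product for the maximal colour
   multiset is the lcm of the products for mu and nu, so by the Chinese
   remainder theorem any common multiple, reduced modulo it, is the least one.
   If n_i and n_j share a factor, L = lcm(n_i, n_j) < n_i n_j, and the words of
   colours i, j and values 0 and L are two different solutions of the
   commutation problem for s = t' = 0; they are also distinct common multiples
   of x^i_0 and x^j_0 of degree e_i + e_j, both of which a least common
   multiple would have to equal. *)

Definition colors (w : seq gen) : seq nat := map fst w.

Lemma deg_colors w i : deg w i = count_mem i (colors w).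
Proof. by rewrite /deg /colors count_map. Qed.

Section Multisets.
Variable T : eqType.

Definition mdiff (s t : seq T) : seq T := foldr (fun x s => rem x s) s t.

Lemma count_mdiff (x : T) (s t : seq T) :
  count_mem x (mdiff s t) = count_mem x s - count_mem x t.
Proof. by elim: t => [|y t IH] /=; rewrite ?subn0 // count_mem_rem IH; lia. Qed.

Lemma perm_count_mem (s t : seq T) :
  (forall x, count_mem x s = count_mem x t) -> perm_eq s t.
Proof. by move=> eq_st; apply/allP => x _ /=; rewrite eq_st. Qed.

Lemma perm_cat_mdiff (s t : seq T) :
  (forall x, count_mem x s <= count_mem x t) -> perm_eq t (s ++ mdiff t s).
Proof.
by move=> le_st; apply: perm_count_mem => x; rewrite count_cat count_mdiff subnKC.
Qed.

Lemma count_mem_filter1 (x c : T) (s : seq T) :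
  count_mem x (filter (predC1 c) s) = if x == c then 0 else count_mem x s.
Proof.
rewrite count_filter; case: eqVneq => [->|xc].
  by rewrite (@eq_count _ _ pred0) ?count_pred0 // => y /=; case: eqVneq.
by apply: eq_count => y /=; case: eqVneq => // ->.
Qed.

Lemma max_count_subset (s t u : seq T) :
  (forall x, count_mem x u = maxn (count_mem x s) (count_mem x t)) ->
  {subset u <= s ++ t}.
Proof. by move=> count_u x; rewrite mem_cat -!has_pred1 !has_count count_u leq_max. Qed.

End Multisets.

Definition lcm_colors (mu nu : seq gen) : seq nat :=
  colors mu ++ mdiff (colors nu) (colors mu).

Lemma count_lcm_colors mu nu x :
  count_mem x (lcm_colors mu nu) = maxn (count_mem x (colors mu)) (count_mem x (colors nu)).
Proof. by rewrite count_cat count_mdiff maxnE. Qed.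

Section Radix.
Variable n : nat -> nat.

Definition radix (cs : seq nat) : nat := \prod_(c <- cs) n c.

Definition word_value (w : seq gen) : nat := foldr (fun g N => g.2 + n g.1 * N) 0 w.

Fixpoint word_of (cs : seq nat) (N : nat) : seq gen :=
  if cs is c :: cs' then (c, N %% n c) :: word_of cs' (N %/ n c) else [::].

Lemma radix_nil : radix [::] = 1.
Proof. exact: big_nil. Qed.

Lemma radix_cons c cs : radix (c :: cs) = n c * radix cs.
Proof. exact: big_cons. Qed.

Lemma radix_cat s t : radix (s ++ t) = radix s * radix t.
Proof. exact: big_cat. Qed.

Lemma perm_radix s t : perm_eq s t -> radix s = radix t.
Proof. exact: perm_big. Qed.

Lemma radix_dvd s t : (forall x, count_mem x s <= count_mem x t) -> radix s %| radix t.
Proof. by move/perm_cat_mdiff/perm_radix ->; rewrite radix_cat dvdn_mulr. Qed.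

Lemma word_value_cat u v :
  word_value (u ++ v) = word_value u + radix (colors u) * word_value v.
Proof.
elim: u => [|g u IH] /=; first by rewrite radix_nil mul1n.
by rewrite IH radix_cons mulnDr addnA mulnA.
Qed.

Lemma colors_word_of cs N : colors (word_of cs N) = cs.
Proof. by elim: cs N => [|c cs IH] N //=; rewrite IH. Qed.

Lemma radix_count c s : radix s = n c ^ count_mem c s * radix (filter (predC1 c) s).
Proof.
elim: s => [|x s IH] /=; first by rewrite radix_nil.
case: (eqVneq x c) => [->|xc] /=; first by rewrite radix_cons IH expnS mulnA.
by rewrite !radix_cons IH mulnCA.
Qed.

Lemma coprime_radix c s :
  {in s, forall x, coprime (n c) (n x)} -> coprime (n c) (radix s).
Proof.
move=> cop; rewrite /radix big_seq; apply: (big_ind (coprime (n c))) => //.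
  exact: coprimen1.
by move=> x y; rewrite coprimeMr => -> ->.
Qed.

(* Split off one colour c at a time: its power is coprime to the rest of the
   product, and powers of [n c] combine by [expn_max]. *)
Lemma radix_max_dvd s t u m :
  {in s ++ t &, forall i j, i != j -> coprime (n i) (n j)} ->
  (forall x, count_mem x u = maxn (count_mem x s) (count_mem x t)) ->
  radix s %| m -> radix t %| m -> radix u %| m.
Proof.
have [b] := ubnP (size s); elim: b s t u => // b IH [|c s] t u.
  move=> _ _ count_u _; rewrite (@perm_radix u t) //.
  by apply: perm_count_mem => x; rewrite count_u max0n.
rewrite ltnS => size_s cop count_u.
have sub_s : {subset c :: s <= (c :: s) ++ t} by move=> x; rewrite mem_cat => ->.
have sub_t : {subset t <= (c :: s) ++ t} by move=> x; rewrite mem_cat orbC => ->.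
have split_dvd v : {subset v <= (c :: s) ++ t} -> radix v %| m =
    (n c ^ count_mem c v %| m) && (radix (filter (predC1 c) v) %| m).
  move=> sub_v; rewrite (radix_count c v) Gauss_dvd // coprimeXl //.
  apply: coprime_radix => x; rewrite mem_filter => /andP [xc vx].
  by apply: cop; [exact: sub_s (mem_head c s) | exact: sub_v | rewrite eq_sym].
rewrite (split_dvd _ sub_s) (split_dvd _ sub_t) (split_dvd _ (max_count_subset count_u)).
move=> /andP [dvd_cs dvd_fs] /andP [dvd_ct dvd_ft]; apply/andP; split.
  by rewrite count_u expn_max dvdn_lcm dvd_cs.
apply: (IH (filter (predC1 c) s) (filter (predC1 c) t)) => //.
- by rewrite size_filter (leq_ltn_trans (count_size _ _) size_s).
- apply: sub_in2 cop => x; rewrite !mem_cat !mem_filter.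
  by move=> /orP [] /andP [_ xv]; rewrite inE xv ?orbT.
- by move=> x; rewrite !count_mem_filter1 count_u /=; case: eqVneq.
- by move: dvd_fs; rewrite /= eqxx.
Qed.

Lemma radix_max s t u :
  {in s ++ t &, forall i j, i != j -> coprime (n i) (n j)} ->
  (forall x, count_mem x u = maxn (count_mem x s) (count_mem x t)) ->
  radix u = lcmn (radix s) (radix t).
Proof.
move=> cop count_u; apply/eqP; rewrite eqn_dvd.
rewrite (radix_max_dvd cop count_u) ?dvdn_lcml ?dvdn_lcmr //=.
by rewrite dvdn_lcm !radix_dvd // => x; rewrite count_u ?leq_maxl ?leq_maxr.
Qed.

End Radix.

Lemma eq_mod_lcm a b x y :
  x = y %[mod a] -> x = y %[mod b] -> x = y %[mod lcmn a b].
Proof.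
wlog le_yx : x y / y <= x => [wlog_le ex ey|/eqP ex /eqP ey].
  case: (leqP y x) => [le_yx|/ltnW le_xy]; first exact: wlog_le.
  by apply/esym; apply: wlog_le.
by apply/eqP; rewrite eqn_mod_dvd // dvdn_lcm -!eqn_mod_dvd ?ex ?ey.
Qed.

Lemma digit_add_inj d a b x y :
  a < d -> b < d -> a + d * x = b + d * y -> a = b /\ x = y.
Proof.
move=> lt_ad lt_bd eq_ab; have d_gt0 := leq_ltn_trans (leq0n a) lt_ad.
have := congr1 (modn^~ d) eq_ab; have := congr1 (divn^~ d) eq_ab.
rewrite ![d * _]mulnC ![_ + _ * d]addnC.
by rewrite !modnMDl !divnMDl // !modn_small // !divn_small // !addn0.
Qed.

Lemma chinese_small a b x y : coprime a b -> x < a -> y < b ->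
  exists2 N, N < a * b & N %% a = x /\ N %% b = y.
Proof.
move=> cop lt_x lt_y.
have ab_gt0 : 0 < a * b.
  by rewrite muln_gt0 (leq_ltn_trans (leq0n x) lt_x) (leq_ltn_trans (leq0n y) lt_y).
exists (chinese a b x y %% (a * b)); first by rewrite ltn_pmod.
rewrite (modn_dvdm _ (dvdn_mulr b (dvdnn a))) (modn_dvdm _ (dvdn_mull a (dvdnn b))).
by rewrite chinese_modl ?chinese_modr // !modn_small.
Qed.

Lemma chinese_small_inj a b x y : coprime a b -> x < a * b -> y < a * b ->
  x = y %[mod a] -> x = y %[mod b] -> x = y.
Proof.
move=> cop lt_x lt_y eq_a eq_b.
have := chinese_remainder cop x y; rewrite eq_a eq_b !eqxx !modn_small //.
by move/eqP.
Qed.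

Lemma lcmn_lt_mul a b : 0 < a -> 0 < b -> ~~ coprime a b -> lcmn a b < a * b.
Proof.
move=> a_gt0 b_gt0 ncop; rewrite -(muln_lcm_gcd a b) -{1}(muln1 (lcmn a b)).
by rewrite ltn_mul2l lcmn_gt0 a_gt0 b_gt0 ltn_neqAle eq_sym ncop gcdn_gt0 a_gt0.
Qed.

Section OdometerWords.
Variables (k : option nat) (n : nat -> nat).
Hypothesis n_gt0 : forall i, color_ok k i -> 0 < n i.
Local Notation radix := (radix n).
Local Notation word_value := (word_value n).
Local Notation word_of := (word_of n).
Local Notation valid_word := (valid_word k n).
Local Notation meq := (meq k n).

Lemma valid_colors w : valid_word w -> all (color_ok k) (colors w).
Proof. by elim: w => [|g w IH] //= /andP [/andP [-> _] /IH]. Qed.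

Lemma radix_gt0 cs : all (color_ok k) cs -> 0 < radix cs.
Proof.
by move=> /allP ok; rewrite /radix big_seq; apply: prodn_cond_gt0 => c /ok /n_gt0.
Qed.

Lemma word_value_lt w : valid_word w -> word_value w < radix (colors w).
Proof.
elim: w => [|[c d] w IH] /=; first by rewrite radix_nil.
move=> /andP [/andP [/= _ lt_d] /IH lt_w]; rewrite radix_cons; nia.
Qed.

Lemma valid_word_of cs N : all (color_ok k) cs -> valid_word (word_of cs N).
Proof.
elim: cs N => [|c cs IH] N //= /andP [ok_c ok_cs].
by rewrite /valid_gen /= ok_c ltn_pmod ?n_gt0 // IH.
Qed.

Lemma word_valueK cs N :
  all (color_ok k) cs -> N < radix cs -> word_value (word_of cs N) = N.
Proof.
elim: cs N => [|c cs IH] N /=; first by rewrite radix_nil; case: N.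
move=> /andP [/n_gt0 n_c ok_cs]; rewrite radix_cons => lt_N.
rewrite IH // ?ltn_divLR // 1?mulnC //.
by rewrite [RHS](divn_eq N (n c)) addnC mulnC.
Qed.

Lemma meq_catl p u v : meq u v -> meq (p ++ u) (p ++ v).
Proof.
elim=> [w|{}u {}v _ IH|{}u w {}v _ IH1 _ IH2|w1 w2 a b c d rel_abcd].
- exact: meq_refl.
- exact: meq_sym IH.
- exact: meq_trans IH1 IH2.
- by rewrite !(catA p w1); apply: meq_step.
Qed.

Lemma meq_invariant u v : meq u v ->
  [/\ perm_eq (colors u) (colors v), word_value u = word_value v &
      valid_word u = valid_word v].
Proof.
elim=> {u v} [w|u v _ [pc vl vd]|u w v _ [pc1 vl1 vd1] _ [pc2 vl2 vd2]|
              w1 w2 a b c d rel_abcd].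
- by [].
- by split; rewrite // perm_sym.
- by split; [exact: perm_trans pc2 | rewrite vl1 | rewrite vd1].
case: rel_abcd => i [j [s [t [t' [s' [[-> -> -> ->] [_ ok_i ok_j]]]]]]].
move=> [lt_s lt_s' lt_t lt_t'] eq_st; split.
- by rewrite /colors !map_cat perm_cat2l perm_cat2r (perm_catC [:: i]).
- rewrite !word_value_cat /= !radix_cons (mulnCA (n i)); congr (_ + _ * (_ + _)); nia.
- by rewrite /valid_word !all_cat /= /valid_gen /= ok_i ok_j lt_s lt_s' lt_t lt_t'.
Qed.

Lemma meq_comm i j s t t' s' w :
  i != j -> color_ok k i -> color_ok k j ->
  s < n i -> t < n j -> t' < n j -> s' < n i ->
  s + n i * t = t' + n j * s' ->
  meq ((i, s) :: (j, t) :: w) ((j, t') :: (i, s') :: w).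
Proof.
move=> ne_ij ok_i ok_j lt_s lt_t lt_t' lt_s' eq_st.
case: (ltngtP i j) ne_ij => // [lt_ij|lt_ji] _.
  apply: (meq_step [::] w); exists i, j, s, t, t', s'; split => //; lia.
apply/meq_sym/(meq_step [::] w); exists j, i, t', s', s, t; split => //; lia.
Qed.

Lemma meq_pairP i j s t t' s' :
  i != j -> color_ok k i -> color_ok k j ->
  s < n i -> t < n j -> t' < n j -> s' < n i ->
  meq [:: (i, s); (j, t)] [:: (j, t'); (i, s')] <-> s + n i * t = t' + n j * s'.
Proof.
move=> ne_ij ok_i ok_j lt_s lt_t lt_t' lt_s'; split; last exact: meq_comm.
by case/meq_invariant => _ /=; rewrite !muln0 !addn0.
Qed.

Lemma meq_swap i j s t w :
  i != j -> valid_gen k n (i, s) -> valid_gen k n (j, t) ->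
  exists t' s', meq ((i, s) :: (j, t) :: w) ((j, t') :: (i, s') :: w).
Proof.
move=> ne_ij /andP [/= ok_i lt_s] /andP [/= ok_j lt_t].
have [n_i n_j] := (n_gt0 ok_i, n_gt0 ok_j).
set N := s + n i * t; exists (N %% n j), (N %/ n j).
apply: meq_comm; rewrite ?ltn_pmod ?ltn_divLR //; first nia.
by rewrite [LHS](divn_eq N (n j)) addnC mulnC.
Qed.

Lemma meq_pull_front w c : valid_word w -> c \in colors w ->
  exists d w', meq w ((c, d) :: w').
Proof.
elim: w => [|[i s] w IH] //= /andP [ok_is ok_w].
have [<- _|ne_ic] := eqVneq i c; first by exists s, w; apply: meq_refl.
rewrite inE eq_sym (negbTE ne_ic) => c_w.
have [d [w' eq_w]] := IH ok_w c_w.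
have [_ _] := meq_invariant eq_w; rewrite ok_w => /esym /andP [ok_cd _].
have [t' [s' eq_sw]] := meq_swap w' ne_ic ok_is ok_cd.
by exists t', ((i, s') :: w'); apply: meq_trans eq_sw; apply: (meq_catl [:: (i, s)]).
Qed.

Lemma meqP u v : valid_word u -> valid_word v ->
  meq u v <-> perm_eq (colors u) (colors v) /\ word_value u = word_value v.
Proof.
move=> ok_u ok_v; split=> [/meq_invariant [] //|[]].
elim: v u ok_u ok_v => [|[c d] v IH] u ok_u ok_v perm_uv eq_uv.
  by move: perm_uv => /perm_nilP; case: u {ok_u eq_uv} => // _; apply: meq_refl.
have c_u : c \in colors u by rewrite (perm_mem perm_uv) mem_head.
have [e [u' eq_u]] := meq_pull_front ok_u c_u.
have [perm_u val_u] := meq_invariant eq_u.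
rewrite ok_u => /esym /andP [/andP [_ lt_e] ok_u'].
move: ok_v => /andP [/andP [_ lt_d] ok_v].
have [eq_ed val_u'] : e = d /\ word_value u' = word_value v.
  apply: (digit_add_inj lt_e lt_d).
  by rewrite -[LHS]/(word_value ((c, e) :: u')) -val_u eq_uv.
apply: meq_trans eq_u _; rewrite eq_ed; apply: (meq_catl [:: (c, d)]).
apply: IH => //; rewrite -(perm_cons c) -/(colors ((c, e) :: u')).
by rewrite (perm_trans _ perm_uv) // perm_sym.
Qed.

Lemma right_multipleP p q : valid_word p -> valid_word q ->
  right_multiple k n p q <->
  (forall x, count_mem x (colors q) <= count_mem x (colors p)) /\
  word_value p %% radix (colors q) = word_value q.
Proof.
move=> ok_p ok_q; split.
  case=> r ok_r /meq_invariant [perm_p val_p _]; split.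
    by move=> x; rewrite (permP perm_p) /colors map_cat count_cat leq_addr.
  by rewrite val_p word_value_cat addnC mulnC modnMDl modn_small ?word_value_lt.
move=> [sub_q val_q]; set cs := mdiff (colors p) (colors q).
have perm_p : perm_eq (colors p) (colors q ++ cs) by apply: perm_cat_mdiff.
have ok_cs : all (color_ok k) cs.
  by move: (valid_colors ok_p); rewrite (perm_all _ perm_p) all_cat => /andP [].
have q_gt0 := radix_gt0 (valid_colors ok_q).
have lt_div : word_value p %/ radix (colors q) < radix cs.
  by rewrite ltn_divLR // mulnC -radix_cat -(perm_radix _ perm_p) word_value_lt.
exists (word_of cs (word_value p %/ radix (colors q))); first exact: valid_word_of.
apply/meqP => //.
  by rewrite /valid_word all_cat; apply/andP; split; [exact: ok_q | exact: valid_word_of].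
split; first by rewrite /colors map_cat -/(colors (word_of _ _)) colors_word_of.
by rewrite word_value_cat word_valueK // addnC mulnC -val_q -divn_eq.
Qed.

Lemma right_multiple_anti p q : valid_word p -> valid_word q ->
  right_multiple k n p q -> right_multiple k n q p -> meq p q.
Proof.
move=> ok_p ok_q /(right_multipleP ok_p ok_q) [sub_qp val_q].
move=> /(right_multipleP ok_q ok_p) [sub_pq _].
have perm_pq : perm_eq (colors p) (colors q).
  by apply: perm_count_mem => x; apply/eqP; rewrite eqn_leq sub_pq sub_qp.
apply/meqP => //; split => //.
by rewrite -val_q modn_small // -(perm_radix _ perm_pq) word_value_lt.
Qed.

End OdometerWords.

Definition pairwise_coprime k (n : nat -> nat) : Prop :=
  forall i j, color_ok k i -> color_ok k j -> i != j -> coprime (n i) (n j).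

Definition unique_commutation k n : Prop :=
  forall i j s t', i < j -> color_ok k i -> color_ok k j -> s < n i -> t' < n j ->
    exists! st : nat * nat,
      [/\ st.1 < n i, st.2 < n j &
          meq k n [:: (i, s); (j, st.2)] [:: (j, t'); (i, st.1)]].

Definition right_lcm_max_degree k n : Prop :=
  forall mu nu, valid_word k n mu -> valid_word k n nu ->
    (exists m, right_common_multiple k n m mu nu) ->
    exists l, [/\ right_lcm k n l mu nu,
      (forall l', right_lcm k n l' mu nu -> meq k n l' l) &
      (forall i, deg l i = maxn (deg mu i) (deg nu i))].

Section Coprime.
Variables (k : option nat) (n : nat -> nat).
Hypothesis n_gt0 : forall i, color_ok k i -> 0 < n i.
Hypothesis n_coprime : pairwise_coprime k n.

Lemma coprime_unique_commutation : unique_commutation k n.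
Proof.
move=> i j s t' lt_ij ok_i ok_j lt_s lt_t'.
have [n_i n_j] := (n_gt0 ok_i, n_gt0 ok_j).
have ne_ij : i != j by rewrite neq_ltn lt_ij.
have cop_ij := n_coprime ok_i ok_j ne_ij.
have [N lt_N [N_i N_j]] := chinese_small cop_ij lt_s lt_t'.
have N_eq_i : s + n i * (N %/ n i) = N by rewrite -N_i addnC mulnC -divn_eq.
have N_eq_j : t' + n j * (N %/ n j) = N by rewrite -N_j addnC mulnC -divn_eq.
have lt_Nj : N %/ n j < n i by rewrite ltn_divLR.
have lt_Ni : N %/ n i < n j by rewrite ltn_divLR // mulnC.
exists (N %/ n j, N %/ n i); split.
  by split => //=; apply/meq_pairP => //; rewrite N_eq_i N_eq_j.
move=> [s' t] [/= lt_s' lt_t /(meq_pairP ne_ij ok_i ok_j lt_s lt_t lt_t' lt_s') eq_st].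
have eq_MN : s + n i * t = N.
  apply: (chinese_small_inj cop_ij); first nia; first by [].
    by rewrite N_i addnC mulnC modnMDl modn_small.
  by rewrite eq_st N_j addnC mulnC modnMDl modn_small.
have [_ ->] : s = s /\ t = N %/ n i by apply: (@digit_add_inj (n i)); rewrite // eq_MN.
have [_ ->] : t' = t' /\ s' = N %/ n j by apply: (@digit_add_inj (n j)); rewrite // -eq_st eq_MN.
by [].
Qed.

Lemma right_lcm_reduce mu nu m :
  valid_word k n mu -> valid_word k n nu -> right_common_multiple k n m mu nu ->
  right_lcm k n (word_of n (lcm_colors mu nu) (word_value n m %% radix n (lcm_colors mu nu)))
    mu nu.
Proof.
move=> ok_mu ok_nu [ok_m mul_mu mul_nu]; set cs := lcm_colors mu nu; set l := word_of _ _ _.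
have ok_munu : all (color_ok k) (colors mu ++ colors nu).
  by rewrite all_cat (valid_colors ok_mu) (valid_colors ok_nu).
have ok_cs : all (color_ok k) cs.
  by apply/allP => x /(max_count_subset (count_lcm_colors _ _)); apply/allP.
have radix_cs : radix n cs = lcmn (radix n (colors mu)) (radix n (colors nu)).
  apply: radix_max (count_lcm_colors _ _) => i j /(allP ok_munu) ok_i /(allP ok_munu) ok_j.
  exact: n_coprime.
have ok_l : valid_word k n l by apply: valid_word_of.
have colors_l : colors l = cs by rewrite colors_word_of.
have val_l : word_value n l = word_value n m %% radix n cs.
  by rewrite (word_valueK n_gt0) // ltn_pmod // (radix_gt0 n_gt0).
have mul_l q : valid_word k n q ->
    (forall x, count_mem x (colors q) <= count_mem x cs) ->
    right_multiple k n m q -> right_multiple k n l q.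
  move=> ok_q sub_q /(right_multipleP n_gt0 ok_m ok_q) [_ val_q].
  apply/(right_multipleP n_gt0 ok_l ok_q); rewrite colors_l; split => //.
  by rewrite val_l (modn_dvdm _ (radix_dvd _ sub_q)).
split; first split => //.
- by apply: mul_l => // x; rewrite count_lcm_colors leq_maxl.
- by apply: mul_l => // x; rewrite count_lcm_colors leq_maxr.
move=> m' [ok_m' /(right_multipleP n_gt0 ok_m' ok_mu) [sub_mu val_mu]].
move=> /(right_multipleP n_gt0 ok_m' ok_nu) [sub_nu val_nu].
apply/(right_multipleP n_gt0 ok_m' ok_l); rewrite colors_l val_l; split.
  by move=> x; rewrite count_lcm_colors geq_max sub_mu sub_nu.
rewrite radix_cs; apply: eq_mod_lcm.
  by rewrite val_mu; case/(right_multipleP n_gt0 ok_m ok_mu): mul_mu.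
by rewrite val_nu; case/(right_multipleP n_gt0 ok_m ok_nu): mul_nu.
Qed.

Lemma coprime_right_lcm_max_degree : right_lcm_max_degree k n.
Proof.
move=> mu nu ok_mu ok_nu [m mul_m].
have lcm_l := right_lcm_reduce ok_mu ok_nu mul_m.
have [[ok_l _ _] least_l] := lcm_l.
eexists; split; first exact: lcm_l.
  move=> l' [[ok_l' mul_mu' mul_nu'] least_l'].
  apply: (right_multiple_anti n_gt0 ok_l' ok_l); last exact: least_l' _ lcm_l.1.
  exact: least_l l' (And3 ok_l' mul_mu' mul_nu').
by move=> i; rewrite !deg_colors colors_word_of count_lcm_colors.
Qed.

End Coprime.

Section NotCoprime.
Variables (k : option nat) (n : nat -> nat).
Hypothesis n_gt0 : forall i, color_ok k i -> 0 < n i.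

Lemma unique_commutation_coprime : unique_commutation k n ->
  forall i j, i < j -> color_ok k i -> color_ok k j -> coprime (n i) (n j).
Proof.
move=> uniq_comm i j lt_ij ok_i ok_j; apply/idPn => ncop.
have [n_i n_j] := (n_gt0 ok_i, n_gt0 ok_j).
have ne_ij : i != j by rewrite neq_ltn lt_ij.
set L := lcmn (n i) (n j).
have lt_L : L < n i * n j by apply: lcmn_lt_mul.
have [st [_ uniq_st]] := uniq_comm i j 0 0 lt_ij ok_i ok_j n_i n_j.
have sol a b : a < n i -> b < n j -> n i * b = n j * a -> st = (a, b).
  by move=> lt_a lt_b eq_ab; apply: uniq_st; split => //=; apply/meq_pairP.
have L_i : n i * (L %/ n i) = L by rewrite mulnC divnK ?dvdn_lcml.
have L_j : n j * (L %/ n j) = L by rewrite mulnC divnK ?dvdn_lcmr.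
have [_ L0] : (L %/ n j, L %/ n i) = (0, 0).
  rewrite -(sol 0 0) ?muln0 //; apply/esym/sol; rewrite ?L_i ?L_j //.
    by rewrite ltn_divLR.
  by rewrite ltn_divLR // mulnC.
have : 0 < L by rewrite lcmn_gt0 n_i n_j.
by rewrite -L_i L0 muln0.
Qed.

Lemma right_LCM_coprime : right_LCM_monoid k n -> pairwise_coprime k n.
Proof.
move=> lcm_mon i j ok_i ok_j ne_ij; apply/idPn => ncop.
have [n_i n_j] := (n_gt0 ok_i, n_gt0 ok_j).
have ok_ij : all (color_ok k) [:: i; j] by rewrite /= ok_i ok_j.
have radix_ij : radix n [:: i; j] = n i * n j by rewrite !radix_cons radix_nil muln1.
have ok_xi : valid_word k n [:: (i, 0)] by rewrite /valid_word /= /valid_gen /= ok_i n_i.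
have ok_xj : valid_word k n [:: (j, 0)] by rewrite /valid_word /= /valid_gen /= ok_j n_j.
have common m : valid_word k n m -> colors m = [:: i; j] ->
    n i %| word_value n m -> n j %| word_value n m ->
    right_common_multiple k n m [:: (i, 0)] [:: (j, 0)].
  move=> ok_m colors_m dvd_i dvd_j; split => //.
    apply/(right_multipleP n_gt0 ok_m ok_xi); rewrite colors_m radix_cons radix_nil muln1.
    by split; [move=> x /=; lia | rewrite /= muln0; apply/eqP].
  apply/(right_multipleP n_gt0 ok_m ok_xj); rewrite colors_m radix_cons radix_nil muln1.
  by split; [move=> x /=; lia | rewrite /= muln0; apply/eqP].
set m0 := [:: (i, 0); (j, 0)].
have ok_m0 : valid_word k n m0 by rewrite /valid_word /= /valid_gen /= ok_i ok_j n_i n_j.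
have mul_m0 : right_common_multiple k n m0 [:: (i, 0)] [:: (j, 0)].
  by apply: common; rewrite //= !muln0 dvdn0.
set L := lcmn (n i) (n j).
set m1 := word_of n [:: i; j] L.
have ok_m1 : valid_word k n m1 by apply: valid_word_of.
have val_m1 : word_value n m1 = L.
  by rewrite (word_valueK n_gt0) // radix_ij lcmn_lt_mul.
have mul_m1 : right_common_multiple k n m1 [:: (i, 0)] [:: (j, 0)].
  by apply: common; rewrite ?colors_word_of ?val_m1 ?dvdn_lcml ?dvdn_lcmr.
have [l [[ok_l mul_i mul_j] least_l]] := lcm_mon _ _ ok_xi ok_xj (ex_intro _ m0 mul_m0).
have [sub_l0 val_l0] := (right_multipleP n_gt0 ok_m0 ok_l).1 (least_l _ mul_m0).
have [_ val_l1] := (right_multipleP n_gt0 ok_m1 ok_l).1 (least_l _ mul_m1).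
have [sub_i _] := (right_multipleP n_gt0 ok_l ok_xi).1 mul_i.
have [sub_j _] := (right_multipleP n_gt0 ok_l ok_xj).1 mul_j.
have colors_l : perm_eq (colors l) [:: i; j].
  apply: perm_count_mem => x; apply/eqP; rewrite eqn_leq sub_l0.
  have := sub_i x; have := sub_j x => /=.
  by case: (eqVneq i x) => [<-|_]; rewrite ?[j == i]eq_sym ?(negbTE ne_ij); lia.
move: val_l1; rewrite -val_l0 (perm_radix _ colors_l) radix_ij val_m1 /= !muln0.
rewrite mod0n modn_small ?lcmn_lt_mul //.
by apply/eqP; rewrite -lt0n lcmn_gt0 n_i n_j.
Qed.

End NotCoprime.

Lemma pairwise_coprime_lt k n :
  (forall i j, i < j -> color_ok k i -> color_ok k j -> coprime (n i) (n j)) ->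
  pairwise_coprime k n.
Proof.
move=> cop_lt i j ok_i ok_j; case: ltngtP => // [lt_ij|lt_ji] _; first exact: cop_lt.
by rewrite coprime_sym; apply: cop_lt.
Qed.

Theorem mainTheorem5 (k : option nat) (n : nat -> nat)
  (hk : if k is Some k' then 0 < k' else true)
  (hn : forall i, color_ok k i -> 0 < n i) :
  let P1 := forall i j, color_ok k i -> color_ok k j -> i != j ->
              coprime (n i) (n j) in
  let P2 := forall i j s t', i < j -> color_ok k i -> color_ok k j ->
              s < n i -> t' < n j ->
              exists! st : nat * nat,
                [/\ st.1 < n i, st.2 < n j &
                    meq k n [:: (i, s); (j, st.2)] [:: (j, t'); (i, st.1)]] in
  let P3 := forall mu nu, valid_word k n mu -> valid_word k n nu ->
              (exists m, right_common_multiple k n m mu nu) ->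
              exists l, [/\ right_lcm k n l mu nu,
                (forall l', right_lcm k n l' mu nu -> meq k n l' l) &
                (forall i, deg l i = maxn (deg mu i) (deg nu i))] in
  let P4 := right_LCM_monoid k n in
  [/\ P1 <-> P2, P1 <-> P3 & P1 <-> P4].
Proof.
move=> P1 P2 P3 P4.
have P1_P2 : P1 -> P2 := coprime_unique_commutation hn.
have P2_P1 : P2 -> P1 := fun P2k => pairwise_coprime_lt (unique_commutation_coprime hn P2k).
have P1_P3 : P1 -> P3 := coprime_right_lcm_max_degree hn.
have P3_P4 : P3 -> P4.
  by move=> P3k mu nu ok_mu ok_nu /(P3k _ _ ok_mu ok_nu) [l [lcm_l _ _]]; exists l.
have P4_P1 : P4 -> P1 := right_LCM_coprime hn.
by split; split; auto.
Qed.
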